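(* Let $\zeta=(m+r+\ell)/(m+r)$ be the money multiplier. (i) In an ample-reserves equilibrium, if aggregate cash $m$ is sufficiently small (holding the other equilibrium quantities and their derivatives fixed), then $\partial\zeta/\partial i>0$ and $\partial\zeta/\partial i_r<0$. (ii) Suppose $L^{-1}(i_\ell)>\bar\delta$. In both ample-reserves and scarce-reserves equilibria, if $m>0$ and $\chi<1$, then $\partial\zeta/\partial\bar\delta<0$.
   Context: Buyers meet sellers in one of three meeting types with probabilities $\sigma_1,\sigma_2,\sigma_3>0$ ($\sum\sigma_j=1$); type-1 buyers can only use cash, type-2 buyers can use cash, deposits and bank notes, type-3 buyers can additionally use unsecured credit up to a limit $\bar\delta\ge0$. DM preferences $u,c$ with $u'>0,u''<0$, $c'>0,c''\ge0$, $u(0)=c(0)=0$, $q^*$ solving $u'(q^* )=c'(q^* )$; bargaining power $\theta\in(0,1]$, payment $v(q)=(1-\theta)u(q)+\theta c(q)$, liquidity premium $\lambda(q)=\theta[u'(q)-c'(q)]/[(1-\theta)u'(q)+\theta c'(q)]$ for $q<q^*$ and $0$ otherwise, $L(z)=\lambda(\min\{q^*,v^{-1}(z)\})$ with decreasing inverse $L^{-1}$. Policy: nominal rate $i\ge0$, interest on reserves $i_r$, reserve requirement $\chi\in(0,1)$, $a=(1-\chi)/\chi$. Bank cost functions $\gamma,\eta$ twice differentiable with $\gamma',\gamma'',\eta',\eta''>0$ on $(0,\infty)$, $\gamma(0)=\gamma'(0)=\eta(0)=\eta'(0)=0$; entry cost $k>0$; $1+i=(1+i_d)(1+i_\ell)$.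 There is a measure $n$ of identical banks each holding reserves $\tilde r$ and lending $\tilde\ell$; aggregate reserves $r=n\tilde r$, aggregate loans (bank notes) $\ell=n\tilde\ell$; aggregate cash $m=\sum_j\sigma_jm_j$ is held only by type-1 buyers in banking equilibria, $m=\sigma_1L^{-1}(i)$ (decreasing in $i$). Ample-reserves equilibrium: $(\tilde r,\tilde\ell)$ solve $[1+\eta'(\tilde\ell)][1+i_r-\gamma'(\tilde r)]=1+i$ and $\gamma'(\tilde r)\tilde r-\gamma(\tilde r)+\eta'(\tilde\ell)\tilde\ell-\eta(\tilde\ell)=k$, $i_d=i_r-\gamma'(\tilde r)$, $i_\ell=\eta'(\tilde\ell)$, $\tilde\ell<a\tilde r$; $n$ solves $(\sigma_2+\sigma_3)L^{-1}(i_\ell)-\sigma_3\bar\delta=n[(1+i_d)\tilde r+\tilde\ell]$. Scarce-reserves equilibrium: $\tilde\ell=a\tilde r$ (so $\ell=ar$ and $\zeta=(m+r/\chi)/(m+r)$), $(\tilde r,i_d)$ solve $\gamma'(\tilde r)\tilde r-\gamma(\tilde r)+\eta'(a\tilde r)a\tilde r-\eta(a\tilde r)=k$ and $i_d=i_r-\gamma'(\tilde r)+[i_\ell-\eta'(a\tilde r)]a$, and $r=\frac{(\sigma_2+\sigma_3)\chi}{1+i_d\chi}L^{-1}(i_\ell)-\frac{\sigma_3\bar\delta\chi}{1+i_d\chi}$. *)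

From Stdlib Require Import Reals.
From Coquelicot Require Import Coquelicot.
Open Scope R_scope.

Definition cost_fn (f : R -> R) : Prop :=
  (forall x, ex_derive f x) /\
  (forall x, ex_derive (Derive f) x) /\
  (forall x, 0 < x -> 0 < Derive f x) /\
  (forall x, 0 < x -> 0 < Derive (Derive f) x) /\
  f 0 = 0 /\ Derive f 0 = 0.

(* Primitives of the economy that are held fixed in the comparative statics:
   meeting probabilities, reserve requirement chi, entry cost k,
   bank cost functions gamma, eta, and the inverse liquidity-premium map L^{-1}. *)
Record Econ := mkEcon {
  s1 : R; s2 : R; s3 : R;
  chi : R;
  kcost : R;
  gam : R -> R;
  eta : R -> R;
  Linv : R -> R }.

Definition econ_ok (E : Econ) : Prop :=
  0 < s1 E /\ 0 < s2 E /\ 0 < s3 E /\ s1 E + s2 E + s3 E = 1 /\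
  0 < chi E < 1 /\ 0 < kcost E /\
  cost_fn (gam E) /\ cost_fn (eta E) /\
  (forall x y, 0 <= x < y -> Linv E y < Linv E x).

Definition acoef (E : Econ) : R := (1 - chi E) / chi E.

Definition cash (E : Econ) (i : R) : R := s1 E * Linv E i.

Definition zeta (m r l : R) : R := (m + r + l) / (m + r).

(* Ample-reserves equilibrium at policy (i, i_r) and credit limit db, with
   per-bank reserves rt, per-bank loans lt and measure of banks n.
   i_d = i_r - gamma'(rt), i_l = eta'(lt). *)
Definition ample_eq (E : Econ) (i ir db rt lt n : R) : Prop :=
  0 <= i /\ 0 < rt /\ 0 < lt /\ 0 < n /\
  (1 + Derive (eta E) lt) * (1 + ir - Derive (gam E) rt) = 1 + i /\
  Derive (gam E) rt * rt - gam E rt + Derive (eta E) lt * lt - eta E lt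
    = kcost E /\
  lt < acoef E * rt /\
  (s2 E + s3 E) * Linv E (Derive (eta E) lt) - s3 E * db
    = n * ((1 + (ir - Derive (gam E) rt)) * rt + lt).

(* Scarce-reserves equilibrium at (i, i_r, db): per-bank reserves rt,
   per-bank loans a*rt, deposit rate id, loan rate il (with the binding
   constraint's multiplier il - eta'(a rt) >= 0), aggregate reserves r. *)
Definition scarce_eq (E : Econ) (i ir db rt id il r : R) : Prop :=
  0 <= i /\ 0 < rt /\ 0 < r /\
  Derive (eta E) (acoef E * rt) <= il /\
  Derive (gam E) rt * rt - gam E rt
    + Derive (eta E) (acoef E * rt) * (acoef E * rt) - eta E (acoef E * rt)
    = kcost E /\
  id = ir - Derive (gam E) rt + (il - Derive (eta E) (acoef E * rt)) * acoef E /\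
  1 + i = (1 + id) * (1 + il) /\
  r = (s2 E + s3 E) * chi E / (1 + id * chi E) * Linv E il
      - s3 E * db * chi E / (1 + id * chi E).

From Stdlib Require Import Reals Lra Psatz.
From Coquelicot Require Import Coquelicot.
Open Scope R_scope.

(* Ample reserves: differentiating the free-entry condition and the rate
   condition (1 + eta'(l))(1 + i_r - gamma'(r)) = 1 + i shows that the
   per-bank loan/reserve ratio l/r rises with i and falls with i_r.  Since
   zeta = 1 + n l / (m + n r), as m -> 0 the derivative of zeta has the sign
   of (l/r)', and the effect of i through cash only reinforces it
   (dm/di <= 0).  For the credit limit, the bank-level quantities are pinned
   down by (i, i_r) alone, so dbar only shrinks the banking sector (n, resp.
   r) at fixed composition, which lowers zeta whenever m > 0. *)

(* [auto_derive] leaves eta-expanded functions [fun y => f y], which [rewrite]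
   and [ring] do not identify with [f]. *)
Ltac eta_reduce :=
  repeat match goal with |- context [fun y : R => ?f y] => change (fun y : R => f y) with f end.

(* Free entry reads [rent (gam E) rt + rent (eta E) lt = kcost E], with
   [lt = acoef E * rt] under scarce reserves. *)
Definition rent (f : R -> R) (x : R) : R := Derive f x * x - f x.

Lemma is_derive_rent_comp (f u : R -> R) (x du : R) :
  ex_derive f (u x) -> ex_derive (Derive f) (u x) -> is_derive u x du ->
  is_derive (fun y => rent f (u y)) x (Derive (Derive f) (u x) * u x * du).
Proof.
  intros Hf1 Hf2 Hu. assert (Hu' : ex_derive u x) by (exists du; exact Hu).
  unfold rent. auto_derive; eta_reduce; [tauto|].
  rewrite (is_derive_unique _ _ _ Hu). ring.
Qed.

Lemma is_derive_loc_unique (f g : R -> R) (x df dg : R) :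
  locally x (fun y => f y = g y) -> is_derive f x df -> is_derive g x dg -> df = dg.
Proof.
  intros Hfg Hf Hg. apply (is_derive_ext_loc _ _ _ _ Hfg) in Hf.
  rewrite <- (is_derive_unique _ _ _ Hf). exact (is_derive_unique _ _ _ Hg).
Qed.

Lemma locally_of_Rabs (x d : R) (P : R -> Prop) :
  0 < d -> (forall y, Rabs (y - x) < d -> P y) -> locally x P.
Proof. intros Hd HP. exists (mkposreal d Hd). exact HP. Qed.

Lemma is_derive_nonpos_of_decreasing (f : R -> R) (x D : R) :
  (forall y z, 0 <= y < z -> f z < f y) -> 0 <= x -> is_derive f x D -> D <= 0.
Proof.
  intros Hdec Hx Hf. apply is_derive_Reals in Hf.
  apply Rnot_lt_le. intros HD.
  destruct (Hf D HD) as [[del Hdel] Hquot]; simpl in Hquot.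
  assert (Hh : Rabs (del / 2) < del) by (rewrite Rabs_right; lra).
  specialize (Hquot (del / 2) ltac:(lra) Hh).
  assert (Hq : (f (x + del / 2) - f x) / (del / 2) < 0).
  { apply Rdiv_neg_pos; [|lra]. pose proof (Hdec x (x + del / 2)). lra. }
  apply Rabs_def2 in Hquot. lra.
Qed.

Lemma pos_affine_near_zero (P L : R) :
  0 < P -> exists eps, 0 < eps /\ forall h, 0 < h < eps -> 0 < P + h * L.
Proof.
  intros HP. pose proof (Rabs_pos L) as HL.
  exists (P / (Rabs L + 1)). split; [apply Rdiv_lt_0_compat; lra|].
  intros h [Hh Heps].
  apply (Rmult_lt_compat_r (Rabs L + 1)) in Heps; [|lra].
  unfold Rdiv in Heps. rewrite Rmult_assoc, Rinv_l, Rmult_1_r in Heps; [|lra].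
  pose proof (Rle_abs (- L)) as HLa. rewrite Rabs_Ropp in HLa. nra.
Qed.

Lemma increasing_inj (h : R -> R) (x y : R) :
  (forall u v, 0 < u -> u < v -> h u < h v) -> 0 < x -> 0 < y -> h x = h y -> x = y.
Proof.
  intros Hh Hx Hy Hxy.
  destruct (Rtotal_order x y) as [Hlt|[Heq|Hgt]]; auto.
  - specialize (Hh x y Hx Hlt). lra.
  - specialize (Hh y x Hy Hgt). lra.
Qed.

Section CostFunction.

Variable f : R -> R.
Hypothesis Hf : cost_fn f.

Lemma cost_Derive_pos (x : R) : 0 < x -> 0 < Derive f x.
Proof. destruct Hf as (_ & _ & Hf1 & _). apply Hf1. Qed.

Lemma cost_Derive2_pos (x : R) : 0 < x -> 0 < Derive (Derive f) x.
Proof. destruct Hf as (_ & _ & _ & Hf2 & _). apply Hf2. Qed.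

Lemma cost_Derive_lt (x y : R) : 0 < x -> x < y -> Derive f x < Derive f y.
Proof.
  intros Hx Hxy. destruct Hf as (_ & Hd2 & _).
  apply (incr_function _ (Finite 0) p_infty (Derive (Derive f))); simpl; try easy.
  - intros z _ _. apply Derive_correct, Hd2.
  - intros z Hz _. exact (cost_Derive2_pos z Hz).
Qed.

Lemma cost_rent_lt (x y : R) : 0 < x -> x < y -> rent f x < rent f y.
Proof.
  intros Hx Hxy. destruct Hf as (Hd1 & Hd2 & _).
  apply (incr_function _ (Finite 0) p_infty (fun z => Derive (Derive f) z * z));
    simpl; try easy.
  - intros z _ _. rewrite <- (Rmult_1_r (_ * z)).
    exact (is_derive_rent_comp f (fun z => z) z 1 (Hd1 z) (Hd2 z) (is_derive_id z)).
  - intros z Hz _. pose proof (cost_Derive2_pos z Hz). nra.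
Qed.

End CostFunction.

Lemma is_derive_zeta_aggregate (m N r l : R -> R) (x dm dN dr dl : R) :
  is_derive m x dm -> is_derive N x dN -> is_derive r x dr -> is_derive l x dl ->
  m x + N x * r x <> 0 ->
  is_derive (fun y => zeta (m y) (N y * r y) (N y * l y)) x
    ((N x ^ 2 * (dl * r x - l x * dr) + m x * (dN * l x + N x * dl) - N x * l x * dm)
       / (m x + N x * r x) ^ 2).
Proof.
  intros Hm HN Hr Hl Hden. unfold zeta.
  assert (ex_derive m x) by (exists dm; exact Hm).
  assert (ex_derive N x) by (exists dN; exact HN).
  assert (ex_derive r x) by (exists dr; exact Hr).
  assert (ex_derive l x) by (exists dl; exact Hl).
  auto_derive; eta_reduce; [tauto|].
  rewrite (is_derive_unique _ _ _ Hm), (is_derive_unique _ _ _ HN),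
    (is_derive_unique _ _ _ Hr), (is_derive_unique _ _ _ Hl).
  field. exact Hden.
Qed.

(* The hypotheses are the differentiated entry and rate conditions, with
   [g2 = gamma''], [e2 = eta''], [e1 = eta'], [B = 1 + i_r - gamma'];
   [dl * r - l * dr] is [r^2] times the derivative of [l / r]. *)
Lemma loan_reserve_ratio_identity (g2 e2 e1 B r l dr dl di dir : R) :
  g2 * r * dr + e2 * l * dl = 0 ->
  e2 * dl * B + (1 + e1) * (dir - g2 * dr) = di ->
  g2 * e2 * (B * r + (1 + e1) * l) * (dl * r - l * dr)
    = (di - (1 + e1) * dir) * (g2 * r ^ 2 + e2 * l ^ 2).
Proof.
  intros Hentry Hrate. rewrite <- Hrate.
  transitivity ((e2 * dl * B - (1 + e1) * g2 * dr) * (g2 * r ^ 2 + e2 * l ^ 2)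
                + ((1 + e1) * g2 * r - e2 * B * l) * (g2 * r * dr + e2 * l * dl)).
  - ring.
  - rewrite Hentry. ring.
Qed.

Lemma loan_rate_unique (a i u1 v1 u2 v2 : R) :
  0 < a -> 0 < 1 + i -> 0 < 1 + v1 -> 0 < 1 + v2 ->
  (1 + u1) * (1 + v1) = 1 + i -> (1 + u2) * (1 + v2) = 1 + i ->
  u1 - u2 = (v1 - v2) * a -> v1 = v2.
Proof.
  intros Ha Hi Hv1 Hv2 H1 H2 Hu.
  assert (0 < 1 + u1) by nra. assert (0 < 1 + u2) by nra.
  destruct (Rtotal_order v1 v2) as [Hlt|[Heq|Hgt]]; [exfalso|exact Heq|exfalso].
  - assert (u1 < u2) by nra. nra.
  - assert (u2 < u1) by nra. nra.
Qed.

Section Economy.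

Variable E : Econ.
Hypothesis HE : econ_ok E.

Lemma gam_cost : cost_fn (gam E).
Proof. destruct HE as (_ & _ & _ & _ & _ & _ & Hg & _). exact Hg. Qed.

Lemma eta_cost : cost_fn (eta E).
Proof. destruct HE as (_ & _ & _ & _ & _ & _ & _ & He & _). exact He. Qed.

Lemma s1_pos : 0 < s1 E.
Proof. destruct HE as (Hs1 & _). exact Hs1. Qed.

Lemma s3_pos : 0 < s3 E.
Proof. destruct HE as (_ & _ & Hs3 & _). exact Hs3. Qed.

Lemma chi_bounds : 0 < chi E < 1.
Proof. destruct HE as (_ & _ & _ & _ & Hchi & _). exact Hchi. Qed.

Lemma Linv_decreasing (x y : R) : 0 <= x < y -> Linv E y < Linv E x.
Proof. destruct HE as (_ & _ & _ & _ & _ & _ & _ & _ & Hdec). apply Hdec. Qed.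

Lemma acoef_pos : 0 < acoef E.
Proof.
  pose proof chi_bounds. unfold acoef. apply Rdiv_lt_0_compat; lra.
Qed.

Lemma ample_eq_reserves_le (i ir db1 db2 r1 l1 n1 r2 l2 n2 : R) :
  ample_eq E i ir db1 r1 l1 n1 -> ample_eq E i ir db2 r2 l2 n2 -> r1 <= r2.
Proof.
  intros (Hi & Hr1 & Hl1 & _ & Hrate1 & Hentry1 & _) (_ & Hr2 & Hl2 & _ & Hrate2 & Hentry2 & _).
  apply Rnot_lt_le. intros Hr.
  pose proof (cost_rent_lt _ gam_cost r2 r1 Hr2 Hr) as Hrent.
  assert (Hl : l1 < l2).
  { apply Rnot_le_lt. intros [Hl|Hl].
    - pose proof (cost_rent_lt _ eta_cost l2 l1 Hl2 Hl). unfold rent in *. lra.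
    - subst. unfold rent in *. lra. }
  pose proof (cost_Derive_lt _ eta_cost l1 l2 Hl1 Hl).
  pose proof (cost_Derive_lt _ gam_cost r2 r1 Hr2 Hr).
  pose proof (cost_Derive_pos _ eta_cost l1 Hl1).
  assert (0 < 1 + ir - Derive (gam E) r1) by nra.
  nra.
Qed.

Lemma ample_eq_unique (i ir db1 db2 r1 l1 n1 r2 l2 n2 : R) :
  ample_eq E i ir db1 r1 l1 n1 -> ample_eq E i ir db2 r2 l2 n2 -> r1 = r2 /\ l1 = l2.
Proof.
  intros H1 H2.
  assert (Hr : r1 = r2)
    by exact (Rle_antisym _ _ (ample_eq_reserves_le _ _ _ _ _ _ _ _ _ _ H1 H2)
                (ample_eq_reserves_le _ _ _ _ _ _ _ _ _ _ H2 H1)).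
  split; [exact Hr|]. subst r2.
  destruct H1 as (_ & _ & Hl1 & _ & _ & Hentry1 & _), H2 as (_ & _ & Hl2 & _ & _ & Hentry2 & _).
  apply (increasing_inj (rent (eta E))); auto.
  - exact (cost_rent_lt _ eta_cost).
  - unfold rent. lra.
Qed.

Lemma scarce_eq_unique (i ir db1 db2 rt1 id1 il1 r1 rt2 id2 il2 r2 : R) :
  scarce_eq E i ir db1 rt1 id1 il1 r1 -> scarce_eq E i ir db2 rt2 id2 il2 r2 ->
  rt1 = rt2 /\ id1 = id2 /\ il1 = il2.
Proof.
  pose proof acoef_pos as Ha.
  intros (Hi & Hr1 & _ & Hil1 & Hentry1 & Hid1 & Hrate1 & _)
         (_ & Hr2 & _ & Hil2 & Hentry2 & Hid2 & Hrate2 & _).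
  assert (Hrt : rt1 = rt2).
  { apply (increasing_inj (fun x => rent (gam E) x + rent (eta E) (acoef E * x))); auto.
    - intros u v Hu Huv.
      pose proof (cost_rent_lt _ gam_cost u v Hu Huv).
      pose proof (cost_rent_lt _ eta_cost (acoef E * u) (acoef E * v) ltac:(nra) ltac:(nra)).
      lra.
    - unfold rent. lra. }
  subst rt2.
  pose proof (cost_Derive_pos _ eta_cost (acoef E * rt1) ltac:(nra)).
  assert (Hil : il1 = il2).
  { apply (loan_rate_unique (acoef E) i id1 il1 id2 il2); auto; lra. }
  subst il2. repeat split; lra.
Qed.

Lemma ample_eq_linearized (pi pir rt lt n : R -> R) (db x0 di dir dr dl : R) :
  locally x0 (fun x => ample_eq E (pi x) (pir x) db (rt x) (lt x) (n x)) ->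
  is_derive pi x0 di -> is_derive pir x0 dir ->
  is_derive rt x0 dr -> is_derive lt x0 dl ->
  Derive (Derive (gam E)) (rt x0) * rt x0 * dr
    + Derive (Derive (eta E)) (lt x0) * lt x0 * dl = 0 /\
  Derive (Derive (eta E)) (lt x0) * dl * (1 + pir x0 - Derive (gam E) (rt x0))
    + (1 + Derive (eta E) (lt x0)) * (dir - Derive (Derive (gam E)) (rt x0) * dr) = di.
Proof.
  intros Heq Hpi Hpir Hrt Hlt.
  destruct gam_cost as (Hg1 & Hg2 & _), eta_cost as (He1 & He2 & _).
  split.
  - apply (is_derive_loc_unique (fun x => rent (gam E) (rt x) + rent (eta E) (lt x))
             (fun _ => kcost E) x0).
    + refine (filter_imp _ _ _ Heq); intros x Hx.
      destruct Hx as (_ & _ & _ & _ & _ & Hentry & _). unfold rent. lra.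
    + exact (is_derive_plus _ _ _ _ _ (is_derive_rent_comp _ _ _ _ (Hg1 _) (Hg2 _) Hrt)
               (is_derive_rent_comp _ _ _ _ (He1 _) (He2 _) Hlt)).
    + exact (is_derive_const (kcost E) x0).
  - apply (is_derive_loc_unique
             (fun x => (1 + Derive (eta E) (lt x)) * (1 + pir x - Derive (gam E) (rt x)))
             (fun x => 1 + pi x) x0).
    + refine (filter_imp _ _ _ Heq); intros x Hx.
      destruct Hx as (_ & _ & _ & _ & Hrate & _). exact Hrate.
    + assert (ex_derive pir x0) by (exists dir; exact Hpir).
      assert (ex_derive rt x0) by (exists dr; exact Hrt).
      assert (ex_derive lt x0) by (exists dl; exact Hlt).
      auto_derive; eta_reduce; [repeat split; auto|].
      rewrite (is_derive_unique _ _ _ Hpir), (is_derive_unique _ _ _ Hrt),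
        (is_derive_unique _ _ _ Hlt). ring.
    + assert (ex_derive pi x0) by (exists di; exact Hpi).
      auto_derive; eta_reduce; [tauto|].
      rewrite (is_derive_unique _ _ _ Hpi). ring.
Qed.

Lemma ample_loan_reserve_ratio_derive (pi pir rt lt n : R -> R) (db x0 di dir dr dl : R) :
  locally x0 (fun x => ample_eq E (pi x) (pir x) db (rt x) (lt x) (n x)) ->
  is_derive pi x0 di -> is_derive pir x0 dir ->
  is_derive rt x0 dr -> is_derive lt x0 dl ->
  exists K, 0 < K /\
    dl * rt x0 - lt x0 * dr = K * (di - (1 + Derive (eta E) (lt x0)) * dir).
Proof.
  intros Heq Hpi Hpir Hrt Hlt.
  destruct (ample_eq_linearized _ _ _ _ _ _ _ _ _ _ _ Heq Hpi Hpir Hrt Hlt)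
    as [Hentry Hrate].
  destruct (locally_singleton _ _ Heq) as (Hi & Hr & Hl & _ & Hrate0 & _).
  pose proof (cost_Derive2_pos _ gam_cost _ Hr) as Hg2.
  pose proof (cost_Derive2_pos _ eta_cost _ Hl) as He2.
  pose proof (cost_Derive_pos _ eta_cost _ Hl) as He1.
  pose proof (loan_reserve_ratio_identity _ _ _ _ _ _ _ _ _ _ Hentry Hrate) as Hid.
  set (g2 := Derive (Derive (gam E)) (rt x0)) in *.
  set (e2 := Derive (Derive (eta E)) (lt x0)) in *.
  set (e1 := Derive (eta E) (lt x0)) in *.
  set (B := 1 + pir x0 - Derive (gam E) (rt x0)) in *.
  assert (HB : 0 < B) by nra.
  assert (HS : 0 < g2 * e2 * (B * rt x0 + (1 + e1) * lt x0))
    by (apply Rmult_lt_0_compat; nra).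
  exists ((g2 * rt x0 ^ 2 + e2 * lt x0 ^ 2) / (g2 * e2 * (B * rt x0 + (1 + e1) * lt x0))).
  split.
  - apply Rdiv_lt_0_compat; [|exact HS].
    pose proof (pow_lt _ 2 Hr). pose proof (pow_lt _ 2 Hl). nra.
  - apply (Rmult_eq_reg_l (g2 * e2 * (B * rt x0 + (1 + e1) * lt x0))); [|apply Rgt_not_eq, HS].
    rewrite Hid. field. repeat split; apply Rgt_not_eq; nra.
Qed.

Lemma ample_zeta_increasing_in_i (ir db i0 : R) (rt lt n : R -> R) :
  locally i0 (fun x => ample_eq E x ir db (rt x) (lt x) (n x)) ->
  ex_derive rt i0 -> ex_derive lt i0 -> ex_derive n i0 -> ex_derive (Linv E) i0 ->
  exists eps, 0 < eps /\ forall mh, 0 < mh < eps ->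
    exists D,
      is_derive (fun x => zeta (cash E x - cash E i0 + mh) (n x * rt x) (n x * lt x)) i0 D
      /\ 0 < D.
Proof.
  intros Heq [dr Hrt] [dl Hlt] [dn Hn] [dM HM].
  destruct (ample_loan_reserve_ratio_derive (fun x => x) (fun _ => ir) rt lt n db i0 1 0 dr dl
              Heq (is_derive_id i0) (is_derive_const ir i0) Hrt Hlt) as [K [HK Hratio]].
  destruct (locally_singleton _ _ Heq) as (Hi & Hr & Hl & Hn0 & _).
  pose proof (is_derive_nonpos_of_decreasing _ _ _ Linv_decreasing Hi HM) as HdM.
  destruct (pos_affine_near_zero (n i0 ^ 2 * K) (dn * lt i0 + n i0 * dl)) as [eps [Heps Hsmall]].
  { pose proof (pow_lt _ 2 Hn0). nra. }
  exists eps. split; [exact Heps|]. intros mh Hmh.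
  assert (Hm : is_derive (fun x => cash E x - cash E i0 + mh) i0 (s1 E * dM)).
  { unfold cash. assert (ex_derive (Linv E) i0) by (exists dM; exact HM).
    auto_derive; eta_reduce; [tauto|]. rewrite (is_derive_unique _ _ _ HM). ring. }
  eexists. split.
  - apply (is_derive_zeta_aggregate _ _ _ _ _ _ _ _ _ Hm Hn Hrt Hlt). nra.
  - replace (cash E i0 - cash E i0 + mh) with mh by ring. rewrite Hratio.
    pose proof (Hsmall mh Hmh). pose proof s1_pos.
    assert (0 <= - (n i0 * lt i0 * (s1 E * dM))).
    { assert (0 < n i0 * lt i0 * s1 E) by (apply Rmult_lt_0_compat; nra). nra. }
    apply Rdiv_lt_0_compat; [nra|]. apply pow_lt. nra.
Qed.

Lemma ample_zeta_decreasing_in_ir (i db ir0 : R) (rt lt n : R -> R) :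
  locally ir0 (fun y => ample_eq E i y db (rt y) (lt y) (n y)) ->
  ex_derive rt ir0 -> ex_derive lt ir0 -> ex_derive n ir0 ->
  exists eps, 0 < eps /\ forall mh, 0 < mh < eps ->
    exists D, is_derive (fun y => zeta mh (n y * rt y) (n y * lt y)) ir0 D /\ D < 0.
Proof.
  intros Heq [dr Hrt] [dl Hlt] [dn Hn].
  destruct (ample_loan_reserve_ratio_derive (fun _ => i) (fun y => y) rt lt n db ir0 0 1 dr dl
              Heq (is_derive_const i ir0) (is_derive_id ir0) Hrt Hlt) as [K [HK Hratio]].
  destruct (locally_singleton _ _ Heq) as (Hi & Hr & Hl & Hn0 & _).
  pose proof (cost_Derive_pos _ eta_cost _ Hl) as He1.
  destruct (pos_affine_near_zero (n ir0 ^ 2 * (K * (1 + Derive (eta E) (lt ir0))))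
              (- (dn * lt ir0 + n ir0 * dl))) as [eps [Heps Hsmall]].
  { pose proof (pow_lt _ 2 Hn0). apply Rmult_lt_0_compat; nra. }
  exists eps. split; [exact Heps|]. intros mh Hmh.
  eexists. split.
  - apply (is_derive_zeta_aggregate (fun _ => mh) _ _ _ _ 0 _ _ _
             (is_derive_const mh ir0) Hn Hrt Hlt). nra.
  - rewrite Hratio. pose proof (Hsmall mh Hmh).
    apply Rdiv_neg_pos; [nra|]. apply pow_lt. nra.
Qed.

Lemma ample_zeta_decreasing_in_credit_limit (i ir db0 : R) (rt lt n : R -> R) :
  locally db0 (fun x => ample_eq E i ir x (rt x) (lt x) (n x)) -> 0 < cash E i ->
  exists D, is_derive (fun x => zeta (cash E i) (n x * rt x) (n x * lt x)) db0 D /\ D < 0.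
Proof.
  intros Heq Hm.
  pose proof (locally_singleton _ _ Heq) as Heq0.
  assert (Hconst : locally db0 (fun x => rt x = rt db0 /\ lt x = lt db0)).
  { refine (filter_imp _ _ _ Heq). intros x Hx. exact (ample_eq_unique _ _ _ _ _ _ _ _ _ _ Hx Heq0). }
  assert (Hrt : is_derive rt db0 0).
  { apply (is_derive_ext_loc (fun _ => rt db0)); [|exact (is_derive_const _ _)].
    refine (filter_imp _ _ _ Hconst). intros x [Hx _]. auto. }
  assert (Hlt : is_derive lt db0 0).
  { apply (is_derive_ext_loc (fun _ => lt db0)); [|exact (is_derive_const _ _)].
    refine (filter_imp _ _ _ Hconst). intros x [_ Hx]. auto. }
  destruct Heq0 as (Hi & Hr & Hl & Hn0 & Hrate0 & _).
  pose proof (cost_Derive_pos _ eta_cost _ Hl).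
  set (A := (1 + (ir - Derive (gam E) (rt db0))) * rt db0 + lt db0).
  assert (HA : 0 < A) by (unfold A; nra).
  assert (Hn : is_derive n db0 (- s3 E / A)).
  { apply (is_derive_ext_loc
             (fun x => ((s2 E + s3 E) * Linv E (Derive (eta E) (lt db0)) - s3 E * x) / A)).
    - refine (filter_imp _ _ _ (filter_and _ _ Heq Hconst)).
      intros x [(_ & _ & _ & _ & _ & _ & _ & Hnx) [Hrx Hlx]].
      rewrite Hrx, Hlx in Hnx. fold A in Hnx. rewrite Hnx.
      change (n x * A / A = n x). field. apply Rgt_not_eq, HA.
    - auto_derive; [exact I|]. field. apply Rgt_not_eq, HA. }
  eexists. split.
  - apply (is_derive_zeta_aggregate (fun _ => cash E i) _ _ _ _ 0 _ _ _
             (is_derive_const _ db0) Hn Hrt Hlt). nra.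
  - pose proof s3_pos.
    apply Rdiv_neg_pos.
    + assert (- s3 E / A < 0) by (apply Rdiv_neg_pos; lra).
      assert (- s3 E / A * lt db0 < 0) by nra. nra.
    + apply pow_lt. nra.
Qed.

Lemma scarce_zeta_decreasing_in_credit_limit (i ir db0 : R) (rt id il r : R -> R) :
  locally db0 (fun x => scarce_eq E i ir x (rt x) (id x) (il x) (r x)) -> 0 < cash E i ->
  exists D, is_derive (fun x => zeta (cash E i) (r x) (acoef E * r x)) db0 D /\ D < 0.
Proof.
  intros Heq Hm.
  pose proof (locally_singleton _ _ Heq) as Heq0.
  assert (Hconst : locally db0 (fun x => rt x = rt db0 /\ id x = id db0 /\ il x = il db0)).
  { refine (filter_imp _ _ _ Heq). intros x Hx.
    exact (scarce_eq_unique _ _ _ _ _ _ _ _ _ _ _ _ Hx Heq0). }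
  destruct Heq0 as (Hi & Hrt0 & Hr0 & Hil0 & _ & _ & Hrate0 & _).
  pose proof acoef_pos as Ha. pose proof chi_bounds. pose proof s3_pos.
  pose proof (cost_Derive_pos _ eta_cost (acoef E * rt db0) ltac:(nra)).
  assert (Hc : 0 < 1 + id db0 * chi E) by nra.
  assert (Hr : is_derive r db0 (- s3 E * chi E / (1 + id db0 * chi E))).
  { apply (is_derive_ext_loc
             (fun x => (s2 E + s3 E) * chi E / (1 + id db0 * chi E) * Linv E (il db0)
                       - s3 E * x * chi E / (1 + id db0 * chi E))).
    - refine (filter_imp _ _ _ (filter_and _ _ Heq Hconst)).
      intros x [(_ & _ & _ & _ & _ & _ & _ & Hrx) (_ & Hidx & Hilx)].
      rewrite Hrx, Hidx, Hilx. reflexivity.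
    - auto_derive; [exact I|]. field. apply Rgt_not_eq, Hc. }
  eexists. split.
  - apply (is_derive_ext (fun x => zeta (cash E i) (r x * 1) (r x * acoef E))).
    { intros x. rewrite Rmult_1_r, Rmult_comm. reflexivity. }
    apply (is_derive_zeta_aggregate (fun _ => cash E i) _ (fun _ => 1) (fun _ => acoef E)
             _ 0 _ 0 0 (is_derive_const _ db0) Hr (is_derive_const _ db0) (is_derive_const _ db0)).
    lra.
  - assert (- s3 E * chi E / (1 + id db0 * chi E) < 0)
      by (apply Rdiv_neg_pos; nra).
    assert (- s3 E * chi E / (1 + id db0 * chi E) * acoef E < 0) by nra.
    apply Rdiv_neg_pos; [nra|]. apply pow_lt. nra.
Qed.

End Economy.

Theorem proposition6 (E : Econ) (HE : econ_ok E) :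
  (* (i-a) ample reserves, d zeta / d i > 0 for m small, holding the other
     quantities and all derivatives (including dm/di) fixed *)
  (forall (ir db i0 : R) (rt lt n : R -> R),
     (exists d, 0 < d /\ forall x, Rabs (x - i0) < d ->
        ample_eq E x ir db (rt x) (lt x) (n x)) ->
     ex_derive rt i0 -> ex_derive lt i0 -> ex_derive n i0 ->
     ex_derive (Linv E) i0 ->
     exists eps, 0 < eps /\ forall mh, 0 < mh < eps ->
       exists D,
         is_derive (fun x => zeta (cash E x - cash E i0 + mh)
                                  (n x * rt x) (n x * lt x)) i0 D
         /\ 0 < D)
  /\
  (* (i-b) ample reserves, d zeta / d i_r < 0 for m small *)
  (forall (i db ir0 : R) (rt lt n : R -> R),
     (exists d, 0 < d /\ forall y, Rabs (y - ir0) < d ->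
        ample_eq E i y db (rt y) (lt y) (n y)) ->
     ex_derive rt ir0 -> ex_derive lt ir0 -> ex_derive n ir0 ->
     exists eps, 0 < eps /\ forall mh, 0 < mh < eps ->
       exists D,
         is_derive (fun y => zeta mh (n y * rt y) (n y * lt y)) ir0 D
         /\ D < 0)
  /\
  (* (ii-a) ample reserves, d zeta / d dbar < 0 *)
  (forall (i ir db0 : R) (rt lt n : R -> R),
     (exists d, 0 < d /\ forall x, Rabs (x - db0) < d ->
        ample_eq E i ir x (rt x) (lt x) (n x)) ->
     ex_derive rt db0 -> ex_derive lt db0 -> ex_derive n db0 ->
     Linv E (Derive (eta E) (lt db0)) > db0 ->
     0 < cash E i -> chi E < 1 ->
     exists D,
       is_derive (fun x => zeta (cash E i) (n x * rt x) (n x * lt x)) db0 D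
       /\ D < 0)
  /\
  (* (ii-b) scarce reserves, d zeta / d dbar < 0 *)
  (forall (i ir db0 : R) (rt id il r : R -> R),
     (exists d, 0 < d /\ forall x, Rabs (x - db0) < d ->
        scarce_eq E i ir x (rt x) (id x) (il x) (r x)) ->
     ex_derive rt db0 -> ex_derive id db0 -> ex_derive il db0 ->
     ex_derive r db0 ->
     Linv E (il db0) > db0 ->
     0 < cash E i -> chi E < 1 ->
     exists D,
       is_derive (fun x => zeta (cash E i) (r x) (acoef E * r x)) db0 D
       /\ D < 0).
Proof.
  repeat split.
  - intros ir db i0 rt lt n [d [Hd Heq]].
    exact (ample_zeta_increasing_in_i E HE ir db i0 rt lt n (locally_of_Rabs _ _ _ Hd Heq)).
  - intros i db ir0 rt lt n [d [Hd Heq]].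
    exact (ample_zeta_decreasing_in_ir E HE i db ir0 rt lt n (locally_of_Rabs _ _ _ Hd Heq)).
  - intros i ir db0 rt lt n [d [Hd Heq]] _ _ _ _ Hm _.
    exact (ample_zeta_decreasing_in_credit_limit E HE i ir db0 rt lt n
             (locally_of_Rabs _ _ _ Hd Heq) Hm).
  - intros i ir db0 rt id il r [d [Hd Heq]] _ _ _ _ _ Hm _.
    exact (scarce_zeta_decreasing_in_credit_limit E HE i ir db0 rt id il r
             (locally_of_Rabs _ _ _ Hd Heq) Hm).
Qed.
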